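(* If $G \ne K_4$ is a connected, claw-free, cubic graph of order $n$, then (a) $\frac{1}{3}n \le \alpha(G) \le \frac{2}{5}n$, and (b) $\frac{3}{5}n \le m(G,3) \le \frac{2}{3}n$.
   Context: A graph is claw-free if it has no induced subgraph isomorphic to $K_{1,3}$; it is cubic if every vertex has degree $3$. $\alpha(G)$ is the independence number. $3$-percolation: starting from a set $S$ of infected vertices, repeatedly infect any uninfected vertex having at least $3$ infected neighbors; $S$ is $3$-percolating if eventually all vertices are infected, and $m(G,3)$ is the minimum cardinality of a $3$-percolating set of $G$. *)

From mathcomp Require Import all_boot all_order.
Set Implicit Arguments. Unset Strict Implicit. Unset Printing Implicit Defensive.

Definition simple_graph (T : finType) (e : rel T) : Prop :=
  symmetric e /\ irreflexive e.

Definition nbhd (T : finType) (e : rel T) (v : T) : {set T} := [set w | e v w].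

Definition cubic (T : finType) (e : rel T) : Prop :=
  forall v : T, #|nbhd e v| = 3.

Definition claw_free (T : finType) (e : rel T) : Prop :=
  ~ exists v a b c : T,
      [/\ e v a, e v b, e v c & [/\ a != b, a != c & b != c]] /\
      [/\ ~~ e a b, ~~ e a c & ~~ e b c].

Definition connected (T : finType) (e : rel T) : Prop :=
  forall x y : T, connect e x y.

Definition is_K4 (T : finType) (e : rel T) : Prop :=
  #|T| = 4 /\ forall x y : T, x != y -> e x y.

Definition independent (T : finType) (e : rel T) (S : {set T}) : bool :=
  [forall x in S, forall y in S, ~~ e x y].

Definition alpha (T : finType) (e : rel T) : nat :=
  \max_(S : {set T} | independent e S) #|S|.

Definition perc_step (T : finType) (e : rel T) (r : nat) (S : {set T}) : {set T} :=
  S :|: [set v | r <= #|[set w in S | e v w]|].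

(* the set of eventually infected vertices: the process is monotone, so it
   stabilises after at most #|T| rounds *)
Definition perc_closure (T : finType) (e : rel T) (r : nat) (S : {set T}) : {set T} :=
  iter #|T| (perc_step e r) S.

Definition percolating (T : finType) (e : rel T) (r : nat) (S : {set T}) : bool :=
  perc_closure e r S == [set: T].

Definition m_perc (T : finType) (e : rel T) (r : nat) : nat :=
  \big[minn/#|T|]_(S : {set T} | percolating e r S) #|S|.

(* Claw-freeness leaves every vertex with at most two neighbours in an independent
   set S, so counting the 3|S| edges leaving S gives 5|S| <= 2n.  Conversely, in a
   connected graph of maximum degree 3 any proper vertex set U contains an
   independent set of size |U|/3: repeatedly take a vertex of U with a neighbour
   outside U and delete its closed neighbourhood.  If some edge uw lies in two
   triangles uwx, uwy, then x and y are non-adjacent (else G = K4) and {x, y}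
   extended greedily outside N[x] u N[y] (at most 6 vertices) gives alpha >= n/3.
   Otherwise every vertex lies in exactly one triangle, so 3 | n, and a single
   vertex extended greedily outside its closed neighbourhood gives
   alpha >= (n - 1)/3, hence alpha >= n/3.  Finally, in a cubic graph a set
   3-percolates iff its complement is independent, so m(G,3) = n - alpha. *)

From mathcomp Require Import all_boot all_order zify.
Import Order.TTheory.

Set Implicit Arguments. Unset Strict Implicit. Unset Printing Implicit Defensive.

Lemma cards3 (T : finType) (a b c : T) :
  a != b -> a != c -> b != c -> #|[set a; b; c]| = 3.
Proof.
move=> ab ac bc; rewrite setUC cardsU1 cards2 ab !inE negb_or.
by rewrite !(eq_sym c) ac bc.
Qed.

Section SimpleGraph.

Variables (T : finType) (e : rel T).
Hypotheses (e_sym : symmetric e) (e_irr : irreflexive e).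

Lemma edge_neq x y : e x y -> x != y.
Proof. by apply: contraTneq => ->; rewrite e_irr. Qed.

Lemma independentP (S : {set T}) :
  reflect {in S &, forall x y, ~~ e x y} (independent e S).
Proof.
apply: (iffP forall_inP) => [indS x y xS | indS x xS].
  exact: (forall_inP (indS x xS)).
by apply/forall_inP => y; apply: indS.
Qed.

Lemma independent0 : independent e set0.
Proof. by apply/independentP => x; rewrite inE. Qed.

Lemma independent1 x : independent e [set x].
Proof. by apply/independentP => y z /set1P-> /set1P->; rewrite e_irr. Qed.

Lemma independent2 x y : ~~ e x y -> independent e [set x; y].
Proof.
by move=> xy; apply/independentP => p q /set2P[]-> /set2P[]->; rewrite ?e_irr // e_sym.
Qed.

Definition closed_nbhd (A : {set T}) : {set T} := A :|: \bigcup_(x in A) nbhd e x.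

Lemma closed_nbhd1 x : closed_nbhd [set x] = x |: nbhd e x.
Proof. by rewrite /closed_nbhd big_set1. Qed.

Lemma card_closed_nbhd1 x : #|closed_nbhd [set x]| = #|nbhd e x|.+1.
Proof. by rewrite closed_nbhd1 cardsU1 inE e_irr. Qed.

Lemma card_closed_nbhd2 x y :
  #|closed_nbhd [set x; y]| <= 2 + #|nbhd e x :|: nbhd e y|.
Proof.
rewrite /closed_nbhd bigcup_setU !big_set1.
apply: leq_trans (leq_card_setU _ _) _.
by rewrite leq_add2r cards2; case: (x != y).
Qed.

Lemma card_setI_closed_nbhd1 (U : {set T}) w z :
  e w z -> z \notin U -> #|U :&: closed_nbhd [set w]| <= #|nbhd e w|.
Proof.
move=> wz zU; rewrite -ltnS -card_closed_nbhd1; apply: proper_card.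
apply/properP; split; first exact: subsetIr.
have zN : z \in closed_nbhd [set w] by rewrite closed_nbhd1 !inE wz orbT.
by exists z; rewrite // inE (negbTE zU).
Qed.

Lemma independentU (A B : {set T}) :
  independent e A -> independent e B -> B \subset ~: closed_nbhd A ->
  independent e (A :|: B).
Proof.
move=> /independentP indA /independentP indB /subsetP farB.
have nAB x y : x \in A -> y \in B -> ~~ e x y.
  move=> xA /farB; rewrite !inE negb_or => /andP[_]; apply: contra => xy.
  by apply/bigcupP; exists x; rewrite // inE.
apply/independentP => x y /setUP[xA|xB] /setUP[yA|yB].
- exact: indA.
- exact: nAB.
- by rewrite e_sym; apply: nAB.
- exact: indB.
Qed.

Lemma connect_exit (U : {set T}) u z :
  connect e u z -> u \in U -> z \notin U -> exists w v, [/\ w \in U, v \notin U & e w v].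
Proof.
case/connectP => p; elim: p u => [|y p IH] u /=; first by move=> _ -> ->.
case/andP => uy py zE uU zU; have [yU|yU] := boolP (y \in U); last by exists u, y.
exact: IH zE yU zU.
Qed.

Lemma connected_closed_setT (W : {set T}) : connected e -> W != set0 ->
  {in W, forall x, nbhd e x \subset W} -> W = setT.
Proof.
move=> conn /set0Pn[u uW] closedW; apply/setP => z; rewrite inE.
apply/negPn/negP => zW; have [w [v [wW vW wv]]] := connect_exit (conn u z) uW zW.
by move: vW; rewrite (subsetP (closedW w wW)) // inE.
Qed.

Definition clique (W : {set T}) : Prop := {in W &, forall x y, x != y -> e x y}.

Lemma clique_nbhd (W : {set T}) x :
  clique W -> #|nbhd e x| < #|W| -> x \in W -> nbhd e x = W :\ x.
Proof.
move=> cliqW ltW xW; apply/esym/eqP; rewrite eqEcard; apply/andP; split.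
  by apply/subsetP => y /setD1P[yx yW]; rewrite inE cliqW // eq_sym.
by move: ltW; rewrite (cardsD1 x W) xW.
Qed.

Lemma regular_clique_setT d (W : {set T}) :
  connected e -> (forall v, #|nbhd e v| = d) -> #|W| = d.+1 -> clique W -> W = setT.
Proof.
move=> conn reg cardW cliqW; apply: connected_closed_setT => //.
  by rewrite -card_gt0 cardW.
by move=> x xW; rewrite (clique_nbhd cliqW) ?reg ?cardW // subsetDl.
Qed.

Lemma card_le_alpha (S : {set T}) : independent e S -> #|S| <= alpha e.
Proof. exact: (leq_bigmax_cond (F := fun S : {set T} => #|S|)). Qed.

Lemma alpha_witness : exists2 I : {set T}, independent e I & #|I| = alpha e.
Proof.
have [I indI alphaE] : {I : {set T} | I \in independent e & alpha e = #|I|}.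
  by apply: eq_bigmax_cond; apply/card_gt0P; exists set0; apply: independent0.
by exists I.
Qed.

Lemma card_nbhdI x (A : {set T}) : #|nbhd e x :&: A| = \sum_(y in A) e x y.
Proof.
rewrite -sum1_card big_mkcond [RHS]big_mkcond /=; apply: eq_bigr => y _.
by rewrite !inE; case: (e x y); case: (y \in A).
Qed.

Lemma claw_free_nbhdI_independent (S : {set T}) y :
  claw_free e -> independent e S -> #|nbhd e y :&: S| <= 2.
Proof.
move=> cf /independentP indS; rewrite leqNgt; apply/negP.
case/card_gt2P => a [b [c [[aN bN cN] [ab bc ca]]]].
move: aN bN cN; rewrite !inE => /andP[ya aS] /andP[yb bS] /andP[yc cS].
apply: cf; exists y, a, b, c; split; first by split => //; split; rewrite // eq_sym.
by split; apply: indS.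
Qed.

(* Double count the edges between S and ~: S: each vertex of S has all its (at
   least d) neighbours outside S, each vertex outside S has at most two in S. *)
Lemma claw_free_card_independent d (S : {set T}) :
  claw_free e -> (forall v, d <= #|nbhd e v|) -> independent e S ->
  (d + 2) * #|S| <= 2 * #|T|.
Proof.
move=> cf deg indS.
have nbhdS x : x \in S -> nbhd e x :&: ~: S = nbhd e x.
  move=> xS; apply/setIidPl/subsetP => y; rewrite !inE.
  by apply: contraL => yS; move/independentP: indS; apply.
have edges : \sum_(x in S) #|nbhd e x| = \sum_(y in ~: S) #|nbhd e y :&: S|.
  rewrite (eq_bigr (fun x => \sum_(y in ~: S) e x y)); last first.
    by move=> x xS; rewrite -card_nbhdI nbhdS.
  rewrite exchange_big; apply: eq_bigr => y _; rewrite card_nbhdI.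
  by apply: eq_bigr => x _; rewrite e_sym.
have lb : #|S| * d <= \sum_(x in S) #|nbhd e x|.
  by rewrite -sum_nat_const; apply: leq_sum => x _.
have ub : \sum_(y in ~: S) #|nbhd e y :&: S| <= #|~: S| * 2.
  rewrite -sum_nat_const; apply: leq_sum => y _.
  exact: claw_free_nbhdI_independent.
have := cardsC S; nia.
Qed.

Lemma claw_free_alpha_le d :
  claw_free e -> (forall v, d <= #|nbhd e v|) -> (d + 2) * alpha e <= 2 * #|T|.
Proof.
move=> cf deg; have [I indI <-] := alpha_witness.
exact: claw_free_card_independent indI.
Qed.

Section Percolation.

Variable r : nat.
Hypothesis regular : forall v, #|nbhd e v| = r.

Lemma perc_step_setC_independent (I : {set T}) :
  independent e I -> perc_step e r (~: I) = setT.
Proof.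
move=> /independentP indI; apply/setP => v; rewrite !inE.
have [vI|] //= := boolP (v \in I); rewrite -(regular v) subset_leq_card //.
apply/subsetP => w; rewrite !inE => vw; rewrite vw andbT.
by apply/negP => wI; move: (indI v w vI wI); rewrite vw.
Qed.

Lemma percolating_setC_independent (I : {set T}) :
  independent e I -> percolating e r (~: I).
Proof.
move=> indI; rewrite /percolating /perc_closure.
case cardT: #|T| => [|k]; first by rewrite eqEcard subsetT cardsT cardT.
rewrite iterSr perc_step_setC_independent // iter_fix //.
by rewrite /perc_step setTU.
Qed.

Lemma perc_step_edge_notin (X : {set T}) v u :
  e v u -> v \notin X -> u \notin X -> v \notin perc_step e r X.
Proof.
move=> vu vX uX; rewrite /perc_step in_setU in_set negb_or vX -ltnNge.
rewrite -(regular v); apply: proper_card; apply/properP; split.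
  by apply/subsetP => w; rewrite !inE => /andP[].
by exists u; rewrite !inE ?vu // (negbTE uX).
Qed.

Lemma percolating_independent_setC (S : {set T}) :
  percolating e r S -> independent e (~: S).
Proof.
move=> percS; apply/independentP => x y; rewrite !inE => xS yS; apply/negP => xy.
have uninfected k :
    (x \notin iter k (perc_step e r) S) && (y \notin iter k (perc_step e r) S).
  elim: k => [|k /andP[xk yk]] /=; first by rewrite xS yS.
  by rewrite (perc_step_edge_notin xy) // (perc_step_edge_notin _ yk xk) // e_sym.
by move: (uninfected #|T|); rewrite -/(perc_closure e r S) (eqP percS) inE.
Qed.

Lemma m_perc_add_alpha : m_perc e r + alpha e = #|T|.
Proof.
have [I indI alphaE] := alpha_witness.
have := cardsC I; rewrite alphaE => cardI.
suff : m_perc e r = #|~: I| by lia.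
apply/eqP; rewrite eqn_leq; apply/andP; split; rewrite /m_perc -minEnat.
  by apply: (bigmin_le_cond (T := nat)); apply: percolating_setC_independent.
apply: (le_bigmin (T := nat)); first exact: max_card.
move=> S /percolating_independent_setC /card_le_alpha; have := cardsC S; lia.
Qed.

End Percolation.

Section Greedy.

Variable d : nat.
Hypotheses (conn : connected e) (deg : forall v, #|nbhd e v| <= d).

Lemma greedy_independent (U : {set T}) : U != setT ->
  exists2 S : {set T}, S \subset U & independent e S /\ #|U| <= d * #|S|.
Proof.
have [n] := ubnP #|U|; elim: n U => // n IH U /ltnSE leUn UT.
have [->|[u uU]] := set_0Vmem U.
  by exists set0 => //; split; [apply: independent0 | rewrite cards0].
have /subsetPn[z _ zU] : ~~ (setT \subset U) by rewrite subTset.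
have [w [v [wU vU wv]]] := connect_exit (conn u z) uU zU.
have wN : w \in closed_nbhd [set w] by rewrite closed_nbhd1 setU11.
set U' := U :\: closed_nbhd [set w].
have wU' : w \notin U' by rewrite inE wN.
have ltU'n : #|U'| < n.
  apply: leq_trans leUn; apply: proper_card; apply/properP.
  by split; [apply: subsetDl | exists w].
have U'T : U' != setT by apply: contraNneq wU' => ->; rewrite inE.
have [S' S'U' [indS' cardS']] := IH U' ltU'n U'T.
have S'N : S' \subset ~: closed_nbhd [set w].
  by apply: subset_trans S'U' _; rewrite /U' setDE subsetIr.
exists (w |: S').
  by rewrite subUset sub1set wU (subset_trans S'U') // subsetDl.
split; first exact: independentU (independent1 w) indS' S'N.
have wS' : w \notin S' by apply: contra wU'; apply: (subsetP S'U').
have := cardsID (closed_nbhd [set w]) U; have := card_setI_closed_nbhd1 wv vU.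
rewrite cardsU1 wS' -/U'; have := deg w; nia.
Qed.

Lemma independent_extension (I : {set T}) : independent e I -> I != set0 ->
  exists2 S : {set T}, independent e S &
    #|T| + d * #|I| <= d * #|S| + #|closed_nbhd I|.
Proof.
move=> indI /set0Pn[x xI].
have UT : ~: closed_nbhd I != setT.
  by apply/negP => /eqP/setP/(_ x); rewrite !inE xI.
have [S' S'U [indS' cardS']] := greedy_independent UT.
exists (I :|: S'); first exact: independentU.
have disjIS' : I :&: S' = set0.
  apply/disjoint_setI0; rewrite disjoint_sym disjoints_subset.
  by rewrite (subset_trans S'U) // setCS subsetUl.
have := cardsC (closed_nbhd I); rewrite cardsU disjIS' cards0 subn0 mulnDr; lia.
Qed.

End Greedy.

Section ClawFreeCubic.

Hypotheses (conn : connected e) (cf : claw_free e) (cub : cubic e).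

Lemma cubic_nbhdE v a b c : e v a -> e v b -> e v c ->
  a != b -> a != c -> b != c -> nbhd e v = [set a; b; c].
Proof.
move=> va vb vc ab ac bc; apply/eqP; rewrite eq_sym eqEcard cub cards3 // andbT.
by apply/subsetP => x; rewrite !inE => /orP[/orP[]|]/eqP->.
Qed.

Lemma claw_free_cubic_triangle v : exists p q, [/\ e v p, e v q & e p q].
Proof.
have : 2 < #|nbhd e v| by rewrite cub.
case/card_gt2P => a [b [c [[]]]]; rewrite !inE => va vb vc [ab bc ca].
have [ab'|] := boolP (e a b); first by exists a, b.
have [ac'|] := boolP (e a c); first by exists a, c.
have [bc'|nbc nac nab] := boolP (e b c); first by exists b, c.
case: cf; exists v, a, b, c; split => //.
by split => //; split; rewrite // eq_sym.
Qed.

Lemma K4_subgraph_is_K4 u w x y :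
  e u w -> e u x -> e w x -> e u y -> e w y -> e x y -> is_K4 e.
Proof.
move=> uw ux wx uy wy xy.
set W := u |: nbhd e u.
have cardW : #|W| = 4 by rewrite cardsU1 inE e_irr cub.
have nbu : nbhd e u = [set w; x; y] by apply: cubic_nbhdE; rewrite ?edge_neq.
have cliqW : clique W.
  move=> p q; rewrite /W nbu !inE -!orbA.
  by move=> /or4P[]/eqP-> /or4P[]/eqP->; rewrite ?eqxx // => _; rewrite // e_sym.
have WT := regular_clique_setT conn cub cardW cliqW.
split; first by rewrite -cardsT -WT.
by move=> p q; apply: cliqW; rewrite WT inE.
Qed.

Lemma diamond_alpha_ge u w x y : e u w -> e u x -> e w x -> e u y -> e w y ->
  x != y -> ~~ e x y -> #|T| <= 3 * alpha e.
Proof.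
move=> uw ux wx uy wy xy nxy.
have deg v : #|nbhd e v| <= 3 by rewrite cub.
have [|S indS cardS] := independent_extension conn deg (independent2 nxy).
  by apply/set0Pn; exists x; rewrite !inE eqxx.
have common : 2 <= #|nbhd e x :&: nbhd e y|.
  have : [set u; w] \subset nbhd e x :&: nbhd e y.
    apply/subsetP => z; rewrite !inE => /orP[]/eqP->.
    by rewrite !(e_sym x) !(e_sym y) ux uy.
  by rewrite !(e_sym x) !(e_sym y) wx wy.
  by move/subset_leq_card; rewrite cards2 edge_neq.
have := card_closed_nbhd2 x y; have := cardsU (nbhd e x) (nbhd e y).
have := card_le_alpha indS; move: cardS; rewrite cards2 xy !cub; lia.
Qed.

Section TriangleCover.

Hypothesis edge_one_triangle : forall u w, e u w -> #|nbhd e u :&: nbhd e w| <= 1.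

Lemma common_nbhd_eq u w x y : e u w -> e u x -> e w x -> e u y -> e w y -> x = y.
Proof.
move=> uw ux wx uy wy; apply: (card_le1_eqP (edge_one_triangle uw)).
  by rewrite !inE uy wy.
by rewrite !inE ux wx.
Qed.

Definition triangle_at v : {set T} :=
  v |: [set w | e v w & [exists z, e v z && e w z]].

Lemma triangle_atE v p q : e v p -> e v q -> e p q -> triangle_at v = [set v; p; q].
Proof.
move=> vp vq pq; have pq' := edge_neq pq.
apply/setP => w; rewrite !inE -orbA; congr (_ || _); apply/idP/idP.
  case/andP => vw /existsP[z /andP[vz wz]]; apply/negPn/negP => /norP[wp wq].
  have nbv : nbhd e v = [set p; q; w] by apply: cubic_nbhdE; rewrite // eq_sym.
  have : z \in nbhd e v by rewrite inE.
  rewrite nbv !inE => /orP[/orP[]|] /eqP zE; subst z.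
  - by case/eqP: wq; apply/esym/(common_nbhd_eq vp vq pq vw); rewrite e_sym.
  - by case/eqP: wp; apply/esym/(common_nbhd_eq vq vp _ vw); rewrite e_sym.
  - by rewrite e_irr in wz.
case/orP => /eqP->; rewrite ?vp ?vq /=; apply/existsP.
  by exists q; rewrite vq pq.
by exists p; rewrite vp e_sym pq.
Qed.

Lemma mem_triangle_at v w : w \in triangle_at v -> triangle_at w = triangle_at v.
Proof.
have [p [q [vp vq pq]]] := claw_free_cubic_triangle v.
have [pv qv qp] : [/\ e p v, e q v & e q p] by split; rewrite e_sym.
rewrite [in X in X -> _](triangle_atE vp vq pq) !inE => /orP[/orP[]|] /eqP->.
- by [].
- rewrite (triangle_atE pv pq vq) (triangle_atE vp vq pq); apply/setP => z.
  by rewrite !inE; case: (z == v); case: (z == p).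
- rewrite (triangle_atE qv qp vp) (triangle_atE vp vq pq); apply/setP => z.
  by rewrite !inE; case: (z == v); case: (z == p); case: (z == q).
Qed.

Lemma card_triangle_at v : #|triangle_at v| = 3.
Proof.
have [p [q [vp vq pq]]] := claw_free_cubic_triangle v.
by rewrite (triangle_atE vp vq pq) cards3 ?edge_neq.
Qed.

(* The triangles through the vertices partition the vertex set. *)
Lemma three_dvd_card : 3 %| #|T|.
Proof.
have eqR : {in [set: T] & &, equivalence_rel (fun x y => y \in triangle_at x)}.
  move=> x y z _ _ _; split; first by rewrite !inE eqxx.
  by move=> /mem_triangle_at ->.
rewrite -cardsT (card_uniform_partition (n := 3) _ (equivalence_partitionP eqR)).
  exact: dvdn_mull.
move=> _ /imsetP[x _ ->]; rewrite -(card_triangle_at x).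
by apply: eq_card => y; rewrite !inE.
Qed.

Lemma triangle_cover_alpha_ge : #|T| <= 3 * alpha e.
Proof.
have [k nE] := dvdnP three_dvd_card.
have [T0|[v _]] := set_0Vmem [set: T]; first by rewrite -cardsT T0 cards0.
have deg u : #|nbhd e u| <= 3 by rewrite cub.
have [|S indS] := independent_extension conn deg (independent1 v).
  by rewrite -card_gt0 cards1.
rewrite card_closed_nbhd1 cub cards1; have := card_le_alpha indS; lia.
Qed.

End TriangleCover.

Lemma claw_free_cubic_alpha_ge : ~ is_K4 e -> #|T| <= 3 * alpha e.
Proof.
move=> notK4.
have [/existsP[u /existsP[w /andP[uw]]]|one_triangle] :=
  boolP [exists u, exists w, e u w && (1 < #|nbhd e u :&: nbhd e w|)].
  case/card_gt1P => x [y []]; rewrite !inE => /andP[ux wx] /andP[uy wy] xy.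
  have [exy|nxy] := boolP (e x y); last exact: diamond_alpha_ge uw ux wx uy wy xy nxy.
  by case: notK4; apply: K4_subgraph_is_K4 uw ux wx uy wy exy.
apply: triangle_cover_alpha_ge => u w uw; rewrite leqNgt.
apply: contraNN one_triangle => gt1.
by apply/existsP; exists u; apply/existsP; exists w; rewrite uw.
Qed.

End ClawFreeCubic.

End SimpleGraph.

Unset Implicit Arguments.

Theorem theorem3p7 (T : finType) (e : rel T) :
  simple_graph e -> connected e -> claw_free e -> cubic e -> ~ is_K4 e ->
  (#|T| <= 3 * alpha e /\ 5 * alpha e <= 2 * #|T|) /\
  (3 * #|T| <= 5 * m_perc e 3 /\ 3 * m_perc e 3 <= 2 * #|T|).
Proof.
move=> [e_sym e_irr] conn cf cub notK4.
have alpha_lb := claw_free_cubic_alpha_ge e_sym e_irr conn cf cub notK4.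
have alpha_ub : (3 + 2) * alpha e <= 2 * #|T|.
  by apply: claw_free_alpha_le => // v; rewrite cub.
have := m_perc_add_alpha e_sym cub; lia.
Qed.
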